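(* Assume $\cos(\varphi_{GU})>0$. Then $\|\mathcal{P}_{G\,P_U(G)^\perp}\|=\frac{1}{\cos(\varphi_{GU})}$ and, for all $f\in H$, $$\|f-P_Gf\|\le\|f-\mathcal{P}_{G\,P_U(G)^\perp}f\|\le\frac{1}{\cos(\varphi_{GU})}\|f-P_Gf\|.$$ If moreover $G\neq H$, the constant $\frac{1}{\cos(\varphi_{GU})}$ in the upper bound cannot be replaced by any smaller constant.
   Context: $H$ is a Hilbert space, $U$ and $G$ are closed subspaces of $H$. $P_W$ denotes the orthogonal projection onto a closed subspace $W$, and $P_U(G)=\{P_Ug:g\in G\}$. For closed subspaces $S,W$, $\cos(\varphi_{SW}):=\inf_{s\in S,\|s\|=1}\|P_Ws\|$. When $\cos(\varphi_{GU})>0$ one has $H=G\oplus P_U(G)^\perp$, and $\mathcal{P}_{G\,P_U(G)^\perp}$ denotes the oblique projection with range $G$ and kernel $P_U(G)^\perp$. *)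

From Stdlib Require Import Reals.
Open Scope R_scope.

Record Hilbert := {
  hcar :> Type;
  hzero : hcar;
  hadd : hcar -> hcar -> hcar;
  hopp : hcar -> hcar;
  hscal : R -> hcar -> hcar;
  hinner : hcar -> hcar -> R;
  hadd_assoc : forall x y z, hadd x (hadd y z) = hadd (hadd x y) z;
  hadd_comm : forall x y, hadd x y = hadd y x;
  hadd_0 : forall x, hadd x hzero = x;
  hadd_opp : forall x, hadd x (hopp x) = hzero;
  hscal_1 : forall x, hscal 1 x = x;
  hscal_assoc : forall a b x, hscal a (hscal b x) = hscal (a * b) x;
  hscal_distr_v : forall a x y, hscal a (hadd x y) = hadd (hscal a x) (hscal a y);
  hscal_distr_s : forall a b x, hscal (a + b) x = hadd (hscal a x) (hscal b x);
  hinner_sym : forall x y, hinner x y = hinner y x;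
  hinner_add_l : forall x y z, hinner (hadd x y) z = hinner x z + hinner y z;
  hinner_scal_l : forall a x y, hinner (hscal a x) y = a * hinner x y;
  hinner_pos : forall x, 0 <= hinner x x;
  hinner_def : forall x, hinner x x = 0 -> x = hzero;
  hcomplete : forall u : nat -> hcar,
    (forall eps, 0 < eps -> exists N, forall m n, (N <= m)%nat -> (N <= n)%nat ->
       sqrt (hinner (hadd (u m) (hopp (u n))) (hadd (u m) (hopp (u n)))) < eps) ->
    exists l, forall eps, 0 < eps -> exists N, forall n, (N <= n)%nat ->
       sqrt (hinner (hadd (u n) (hopp l)) (hadd (u n) (hopp l))) < eps
}.

Arguments hzero {h}.
Arguments hadd {h}.
Arguments hopp {h}.
Arguments hscal {h}.
Arguments hinner {h}.

Definition hsub {H : Hilbert} (x y : H) : H := hadd x (hopp y).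

Definition hnorm {H : Hilbert} (x : H) : R := sqrt (hinner x x).

Definition hconv {H : Hilbert} (u : nat -> H) (l : H) : Prop :=
  forall eps, 0 < eps -> exists N, forall n, (N <= n)%nat -> hnorm (hsub (u n) l) < eps.

Definition closed_subspace {H : Hilbert} (S : H -> Prop) : Prop :=
  S hzero /\
  (forall x y, S x -> S y -> S (hadd x y)) /\
  (forall a x, S x -> S (hscal a x)) /\
  (forall u l, (forall n, S (u n)) -> hconv u l -> S l).

Definition is_orth_proj {H : Hilbert} (W : H -> Prop) (P : H -> H) : Prop :=
  forall f, W (P f) /\ forall w, W w -> hinner (hsub f (P f)) w = 0.

Definition image_set {H : Hilbert} (P : H -> H) (G : H -> Prop) : H -> Prop :=
  fun y => exists g, G g /\ y = P g.

Definition orth {H : Hilbert} (S : H -> Prop) : H -> Prop :=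
  fun x => forall s, S s -> hinner x s = 0.

Definition is_oblique_proj {H : Hilbert} (G K : H -> Prop) (Q : H -> H) : Prop :=
  forall f, G (Q f) /\ K (hsub f (Q f)).

Definition is_inf (E : R -> Prop) (c : R) : Prop :=
  (forall x, E x -> c <= x) /\ (forall b, (forall x, E x -> b <= x) -> b <= c).

Definition is_sup (E : R -> Prop) (c : R) : Prop :=
  (forall x, E x -> x <= c) /\ (forall b, (forall x, E x -> x <= b) -> c <= b).

(* cos(phi_{S W}) = inf_{s in S, ||s|| = 1} ||P_W s||, with P_W the orthogonal
   projection onto W; c is that infimum *)
Definition is_cos_angle {H : Hilbert} (S : H -> Prop) (PW : H -> H) (c : R) : Prop :=
  is_inf (fun r => exists s, S s /\ hnorm s = 1 /\ r = hnorm (PW s)) c.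

Definition is_opnorm {H : Hilbert} (Q : H -> H) (c : R) : Prop :=
  is_sup (fun r => exists f, hnorm f <= 1 /\ r = hnorm (Q f)) c.

(* The proof rests on three elementary facts:
   - the angle bound c ||g|| <= ||P_U g|| for g in G, and <x, P_U y> =
     <P_U x, P_U y>; together they give uniqueness of Q f and the bound
     c ||Q f|| <= ||f|| (Cauchy-Schwarz applied to <f, P_U Q f>);
   - a two-vector inequality: if w is orthogonal to q, w - q is orthogonal
     to P_U q and c ||q|| <= ||P_U q||, then c ||w - q|| <= ||w||.  Applied
     to w = f - P_G f and q = Q f - P_G f it yields the upper residual bound,
     the lower one being the best-approximation property of P_G;
   - for unit vectors s in G with ||P_U s|| close to c, the vectors P_U s
     (with Q (P_U s) = s) and s - P_U s (with Q (s - P_U s) = 0) show that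
     1/c is the exact operator norm and that the residual constant is sharp. *)

From Stdlib Require Import Reals Lra Psatz Classical.
Open Scope R_scope.

Lemma le_of_sq_le (x y : R) : 0 <= y -> x * x <= y * y -> x <= y.
Proof. intros. nra. Qed.

Lemma le_div_of_mul_le (c x y : R) : 0 < c -> c * x <= y -> x <= (1 / c) * y.
Proof.
  intros Hc Hle. apply (Rmult_le_reg_l c); [exact Hc|].
  replace (c * ((1 / c) * y)) with y by (field; lra). exact Hle.
Qed.

Lemma mul_lt1_of_lt_inv (b c : R) : 0 < c -> b < 1 / c -> b * c < 1.
Proof.
  intros Hc Hb. apply (Rmult_lt_compat_r c) in Hb; [|exact Hc].
  replace (1 / c * c) with 1 in Hb by (field; lra). exact Hb.
Qed.

(* The real core of the residual bound: with T = ||q||^2, A = ||P_U q||^2 and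
   W = ||w||^2, Cauchy-Schwarz gives (T A)^2 <= W T A (T - A), and together
   with the angle bound c^2 T <= A this forces c^2 (W + T) <= W. *)
Lemma residual_arith (T A W c : R) :
  0 < c -> c * c <= 1 -> 0 <= T -> 0 <= W -> 0 <= A ->
  c * c * T <= A -> (T * A) * (T * A) <= W * (T * A * (T - A)) ->
  c * c * (W + T) <= W.
Proof.
  intros Hc Hc1 HT HW HA HcA HCS.
  destruct (Req_dec T 0) as [T0|Tnz].
  - subst T. nra.
  - assert (Tpos : 0 < T) by lra.
    assert (Apos : 0 < A) by (assert (0 < c * c) by nra; nra).
    assert (HTA : T * A <= W * (T - A)).
    { apply (Rmult_le_reg_l (T * A)); [nra | lra]. }
    assert (HT' : c * c * T <= W * (1 - c * c)).
    { apply (Rmult_le_reg_l T); [lra | nra]. }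
    nra.
Qed.

Lemma is_sup_intro (E : R -> Prop) (M : R) :
  (forall x, E x -> x <= M) -> (forall b, b < M -> exists x, E x /\ b < x) ->
  is_sup E M.
Proof.
  intros Hub Happ. split; [exact Hub|].
  intros b Hb. apply Rnot_lt_le. intro Hlt.
  destruct (Happ b Hlt) as (x & Ex & Hx). specialize (Hb x Ex). lra.
Qed.

Lemma is_inf_approx (E : R -> Prop) (c e : R) :
  is_inf E c -> c < e -> exists x, E x /\ x < e.
Proof.
  intros [_ Hglb] He. apply NNPP. intro Hnone.
  assert (e <= c); [|lra].
  apply Hglb. intros x Ex. apply Rnot_lt_le. intro Hx. apply Hnone. now exists x.
Qed.

Section InnerProduct.
Context {H : Hilbert}.
Implicit Types x y z : H.

Lemma inner_zero_l y : hinner hzero y = 0.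
Proof. pose proof (hinner_add_l H hzero hzero y) as E. rewrite hadd_0 in E. lra. Qed.

Lemma inner_zero_r y : hinner y hzero = 0.
Proof. rewrite hinner_sym. apply inner_zero_l. Qed.

Lemma inner_opp_l x y : hinner (hopp x) y = - hinner x y.
Proof.
  pose proof (hinner_add_l H x (hopp x) y) as E.
  rewrite hadd_opp, inner_zero_l in E. lra.
Qed.

Lemma inner_opp_r x y : hinner y (hopp x) = - hinner y x.
Proof. rewrite !(hinner_sym H y). apply inner_opp_l. Qed.

Lemma inner_add_r x y z : hinner x (hadd y z) = hinner x y + hinner x z.
Proof. rewrite !(hinner_sym H x). apply hinner_add_l. Qed.

Lemma inner_scal_r a x y : hinner x (hscal a y) = a * hinner x y.
Proof. rewrite !(hinner_sym H x). apply hinner_scal_l. Qed.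

Lemma sub_eq0 x y : hinner (hsub x y) (hsub x y) = 0 -> x = y.
Proof.
  intro E. apply hinner_def in E. unfold hsub in E.
  transitivity (hadd (hadd x (hopp y)) y).
  - rewrite <- hadd_assoc, (hadd_comm _ (hopp y) y), hadd_opp, hadd_0. reflexivity.
  - rewrite E, hadd_comm, hadd_0. reflexivity.
Qed.

End InnerProduct.

Ltac inner_expand :=
  unfold hsub in *;
  repeat progress rewrite ?hinner_add_l, ?inner_add_r, ?inner_opp_l, ?inner_opp_r,
    ?hinner_scal_l, ?inner_scal_r, ?inner_zero_l, ?inner_zero_r in *.

Lemma sub_sub_cancel {H : Hilbert} (f x p : H) : hsub (hsub f p) (hsub x p) = hsub f x.
Proof.
  apply sub_eq0. inner_expand.
  rewrite (hinner_sym _ p f), (hinner_sym _ x f), (hinner_sym _ p x). ring.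
Qed.

Section Norms.
Context {H : Hilbert}.
Implicit Types x y : H.

Lemma norm_nonneg x : 0 <= hnorm x.
Proof. apply sqrt_pos. Qed.

Lemma norm_sq x : hnorm x * hnorm x = hinner x x.
Proof. apply sqrt_sqrt, hinner_pos. Qed.

Lemma norm_scal a x : 0 <= a -> hnorm (hscal a x) = a * hnorm x.
Proof.
  intro Ha. unfold hnorm. rewrite hinner_scal_l, inner_scal_r, <- Rmult_assoc,
    sqrt_mult_alt by nra. rewrite sqrt_square by exact Ha. reflexivity.
Qed.

Lemma norm_eq0 x : hnorm x = 0 -> x = hzero.
Proof. intro E. apply hinner_def. rewrite <- norm_sq, E. ring. Qed.

Lemma scaled_norm_le c x y :
  0 <= c -> (c * hnorm x <= hnorm y <-> c * c * hinner x x <= hinner y y).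
Proof.
  intro Hc. rewrite <- !norm_sq.
  pose proof (norm_nonneg x). pose proof (norm_nonneg y).
  split; intro Hle.
  - assert (0 <= c * hnorm x) by nra. nra.
  - apply le_of_sq_le; nra.
Qed.

Lemma norm_le x y : hinner x x <= hinner y y -> hnorm x <= hnorm y.
Proof. intro Hle. apply sqrt_le_1_alt, Hle. Qed.

Lemma cauchy_schwarz_sq x y : hinner x y * hinner x y <= hinner x x * hinner y y.
Proof.
  pose proof (hinner_pos _ (hsub (hscal (hinner y y) x) (hscal (hinner x y) y))) as P.
  inner_expand. rewrite (hinner_sym _ y x) in P.
  pose proof (hinner_pos _ x). pose proof (hinner_pos _ y).
  destruct (Req_dec (hinner y y) 0) as [E|E].
  - apply hinner_def in E. subst y. rewrite inner_zero_r. nra.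
  - apply (Rmult_le_reg_l (hinner y y)); nra.
Qed.

End Norms.

Section Subspace.
Context {H : Hilbert} (S : H -> Prop) (hS : closed_subspace S).

Lemma subspace_zero : S hzero.
Proof. apply hS. Qed.

Lemma subspace_scal a x : S x -> S (hscal a x).
Proof. apply hS. Qed.

Lemma subspace_sub x y : S x -> S y -> S (hsub x y).
Proof.
  intros Hx Hy. destruct hS as (_ & Hadd & Hscal & _).
  assert (E : hopp y = hscal (-1) y).
  { apply sub_eq0. inner_expand. ring. }
  unfold hsub. rewrite E. auto.
Qed.

End Subspace.

Section OrthogonalProjection.
Context {H : Hilbert} (W : H -> Prop) (P : H -> H).
Hypothesis hW : closed_subspace W.
Hypothesis hP : is_orth_proj W P.

Lemma proj_mem f : W (P f).
Proof. apply hP. Qed.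

Lemma proj_orth f w : W w -> hinner (hsub f (P f)) w = 0.
Proof. apply hP. Qed.

Lemma proj_inner x y : hinner x (P y) = hinner (P x) (P y).
Proof. pose proof (proj_orth x (P y) (proj_mem y)). inner_expand. lra. Qed.

Lemma proj_unique f p : W p -> (forall w, W w -> hinner (hsub f p) w = 0) -> P f = p.
Proof.
  intros Wp Hp. apply sub_eq0.
  assert (Wd : W (hsub (P f) p)) by (apply subspace_sub; auto using proj_mem).
  pose proof (proj_orth f _ Wd). pose proof (Hp _ Wd). inner_expand. lra.
Qed.

Lemma proj_scal a x : P (hscal a x) = hscal a (P x).
Proof.
  apply proj_unique; [apply subspace_scal; auto using proj_mem|].
  intros w Ww. pose proof (proj_orth x w Ww). inner_expand. nra.
Qed.

Lemma proj_contract x : hinner (P x) (P x) <= hinner x x.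
Proof.
  pose proof (proj_inner x x). pose proof (hinner_pos _ (hsub x (P x))).
  inner_expand. rewrite (hinner_sym _ (P x) x) in *. lra.
Qed.

Lemma proj_best_approx f x :
  W x -> hinner (hsub f (P f)) (hsub f (P f)) <= hinner (hsub f x) (hsub f x).
Proof.
  intro Wx.
  assert (Wd : W (hsub (P f) x)) by (apply subspace_sub; auto using proj_mem).
  pose proof (proj_orth f _ Wd). pose proof (hinner_pos _ (hsub (P f) x)).
  inner_expand. rewrite (hinner_sym _ (P f) f), (hinner_sym _ x f),
    (hinner_sym _ x (P f)) in *. lra.
Qed.

Lemma proj_dist_pos h : ~ W h -> 0 < hnorm (hsub h (P h)).
Proof.
  intro Nh. destruct (Rle_lt_or_eq_dec _ _ (norm_nonneg (hsub h (P h)))) as [|E];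
    [assumption|].
  exfalso. apply Nh. symmetry in E. apply norm_eq0 in E.
  rewrite (sub_eq0 h (P h)); [apply proj_mem|]. rewrite E. apply inner_zero_l.
Qed.

(* Cauchy-Schwarz is applied to w and the vector
   ||q||^2 P q - ||P q||^2 q, which is orthogonal to q. *)
Lemma proj_residual_bound c w q :
  0 < c -> c <= 1 -> hinner w q = 0 -> hinner (hsub w q) (P q) = 0 ->
  c * hnorm q <= hnorm (P q) -> c * hnorm (hsub w q) <= hnorm w.
Proof.
  intros Hc Hc1 Hwq Horth Hangle.
  apply scaled_norm_le in Hangle; [|lra]. apply scaled_norm_le; [lra|].
  set (T := hinner q q) in *. set (A := hinner (P q) (P q)) in *.
  set (Ww := hinner w w) in *. set (v := hsub (hscal T (P q)) (hscal A q)).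
  assert (EqA : hinner q (P q) = A) by apply proj_inner.
  assert (EwA : hinner w (P q) = A) by (inner_expand; lra).
  assert (Ewv : hinner w v = T * A).
  { unfold v. inner_expand. rewrite EwA, Hwq. ring. }
  assert (Evv : hinner v v = T * A * (T - A)).
  { unfold v. inner_expand. rewrite (hinner_sym _ (P q) q), EqA. fold T A. ring. }
  assert (Ediff : hinner (hsub w q) (hsub w q) = Ww + T).
  { inner_expand. rewrite (hinner_sym _ q w), Hwq. fold Ww T. ring. }
  pose proof (cauchy_schwarz_sq w v) as CS. rewrite Ewv, Evv in CS.
  rewrite Ediff.
  apply (residual_arith T A Ww c); try apply hinner_pos; [lra | nra | lra | exact CS].
Qed.

End OrthogonalProjection.

Section ObliqueProjection.
Context {H : Hilbert} (U G : H -> Prop) (PU PG Q : H -> H) (c : R).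
Hypothesis hU : closed_subspace U.
Hypothesis hG : closed_subspace G.
Hypothesis hPU : is_orth_proj U PU.
Hypothesis hPG : is_orth_proj G PG.
Hypothesis hc : is_cos_angle G PU c.
Hypothesis hcpos : 0 < c.
Hypothesis hQ : is_oblique_proj G (orth (image_set PU G)) Q.

Lemma angle_lower g : G g -> c * hnorm g <= hnorm (PU g).
Proof.
  intro Gg. pose proof (norm_nonneg g) as Hg0.
  destruct (Req_dec (hnorm g) 0) as [E|E].
  { rewrite E, Rmult_0_r. apply norm_nonneg. }
  set (a := / hnorm g).
  assert (Ha : 0 < a) by (apply Rinv_0_lt_compat; lra).
  assert (Hunit : hnorm (hscal a g) = 1).
  { rewrite norm_scal by lra. unfold a. field. exact E. }
  assert (Hc : c <= hnorm (PU (hscal a g))).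
  { apply (proj1 hc). exists (hscal a g). repeat split; [apply subspace_scal|]; assumption. }
  rewrite (proj_scal U PU hU hPU), norm_scal in Hc by lra.
  apply (Rmult_le_reg_l a); [exact Ha|].
  replace (a * (c * hnorm g)) with c by (unfold a; field; exact E). exact Hc.
Qed.

Lemma angle_approx e : c < e -> exists s, G s /\ hnorm s = 1 /\ hnorm (PU s) < e.
Proof.
  intro He. destruct (is_inf_approx _ _ _ hc He) as (r & (s & Gs & Ns & ->) & Hr).
  now exists s.
Qed.

Lemma angle_le1 : c <= 1.
Proof.
  destruct (angle_approx (c + 1)) as (s & Gs & Ns & _); [lra|].
  assert (Hc : c * hnorm s <= hnorm (PU s)) by (apply angle_lower; exact Gs).
  pose proof (norm_le _ _ (proj_contract U PU hPU s)). rewrite Ns in *. lra.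
Qed.

Lemma angle_approx_inv b :
  b < 1 / c -> exists s, G s /\ hnorm s = 1 /\ b * hnorm (PU s) < 1.
Proof.
  intro Hb. pose proof (mul_lt1_of_lt_inv b c hcpos Hb) as Hbc.
  destruct (Rle_lt_dec b 0) as [Hneg|Hpos].
  - destruct (angle_approx (c + 1)) as (s & Gs & Ns & _); [lra|].
    exists s. pose proof (norm_nonneg (PU s)). repeat split; auto. nra.
  - destruct (angle_approx (/ b)) as (s & Gs & Ns & Hs).
    + apply (Rmult_lt_reg_l b); [exact Hpos|]. rewrite Rinv_r; lra.
    + exists s. repeat split; auto.
      apply (Rmult_lt_compat_l b) in Hs; [|exact Hpos]. rewrite Rinv_r in Hs; lra.
Qed.

Lemma oblique_mem f : G (Q f).
Proof. apply hQ. Qed.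

Lemma oblique_orth f g : G g -> hinner (hsub f (Q f)) (PU g) = 0.
Proof. intro Gg. apply (proj2 (hQ f)). now exists g. Qed.

Lemma oblique_unique f x :
  G x -> (forall g, G g -> hinner (hsub f x) (PU g) = 0) -> Q f = x.
Proof.
  intros Gx Hx. apply sub_eq0.
  set (d := hsub (Q f) x).
  assert (Gd : G d) by (apply subspace_sub; auto using oblique_mem).
  assert (Ed : hinner d (PU d) = 0).
  { pose proof (oblique_orth f d Gd). pose proof (Hx d Gd).
    unfold d at 1. inner_expand. lra. }
  rewrite (proj_inner U PU hPU) in Ed.
  pose proof (angle_lower d Gd) as Hd. apply scaled_norm_le in Hd; [|lra].
  pose proof (hinner_pos _ d). assert (0 < c * c) by nra. nra.
Qed.

Lemma oblique_on_PU a g : G g -> Q (hscal a (PU g)) = hscal a g.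
Proof.
  intro Gg. apply oblique_unique; [now apply subspace_scal|].
  intros g' Gg'. inner_expand. rewrite (proj_inner U PU hPU g). ring.
Qed.

Lemma oblique_on_defect g : Q (hsub g (PU g)) = hzero.
Proof.
  apply oblique_unique; [now apply subspace_zero|].
  intros g' _. pose proof (proj_orth U PU hPU g _ (proj_mem U PU hPU g')).
  inner_expand. lra.
Qed.

Lemma oblique_norm_le f : hnorm (Q f) <= (1 / c) * hnorm f.
Proof.
  apply le_div_of_mul_le; [exact hcpos|].
  set (A := hinner (PU (Q f)) (PU (Q f))).
  assert (EfA : hinner f (PU (Q f)) = A).
  { pose proof (oblique_orth f _ (oblique_mem f)). inner_expand.
    rewrite (proj_inner U PU hPU (Q f)) in *. unfold A. lra. }
  assert (HA : A <= hinner f f).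
  { pose proof (cauchy_schwarz_sq f (PU (Q f))) as CS. rewrite EfA in CS.
    fold A in CS. pose proof (hinner_pos _ (PU (Q f))). pose proof (hinner_pos _ f).
    destruct (Req_dec A 0) as [E|E]; [lra|].
    apply (Rmult_le_reg_l A); nra. }
  pose proof (angle_lower _ (oblique_mem f)) as Hl. apply scaled_norm_le in Hl; [|lra].
  apply scaled_norm_le; [lra|]. fold A in Hl. lra.
Qed.

(* ||Q|| >= 1/c: Q stretches P_U s / ||P_U s|| to s / ||P_U s||. *)
Lemma oblique_norm_attained b : b < 1 / c -> exists f, hnorm f <= 1 /\ b < hnorm (Q f).
Proof.
  intro Hb. destruct (angle_approx_inv b Hb) as (s & Gs & Ns & Hbs).
  pose proof (angle_lower s Gs) as Hl. rewrite Ns, Rmult_1_r in Hl.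
  set (a := / hnorm (PU s)).
  assert (Ha : 0 < a) by (apply Rinv_0_lt_compat; lra).
  exists (hscal a (PU s)). rewrite oblique_on_PU, !norm_scal, Ns by (auto; lra).
  split.
  - right. unfold a. field. lra.
  - apply (Rmult_lt_reg_l (hnorm (PU s))); [lra|].
    replace (hnorm (PU s) * (a * 1)) with 1 by (unfold a; field; lra). lra.
Qed.

Lemma oblique_residual_le f : c * hnorm (hsub f (Q f)) <= hnorm (hsub f (PG f)).
Proof.
  set (q := hsub (Q f) (PG f)).
  assert (Gq : G q).
  { apply (subspace_sub G hG); [apply oblique_mem | apply (proj_mem G PG hPG)]. }
  assert (Eres : hsub (hsub f (PG f)) q = hsub f (Q f)) by apply sub_sub_cancel.
  rewrite <- Eres.
  apply (proj_residual_bound U PU hPU); auto using angle_lower, angle_le1.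
  - apply (proj_orth G PG hPG f q Gq).
  - rewrite Eres. apply oblique_orth, Gq.
Qed.

Lemma defect_dist s :
  G s -> hnorm s = 1 ->
  hnorm (hsub (hsub s (PU s)) (PG (hsub s (PU s)))) <= hnorm (PU s) * hnorm (hsub s (PU s)).
Proof.
  intros Gs Ns. set (b := hsub s (PU s)).
  pose proof (norm_sq s) as Es. rewrite Ns, Rmult_1_r in Es.
  assert (EsP : hinner s (PU s) = hinner (PU s) (PU s)) by apply (proj_inner U PU hPU).
  set (t := hinner b b).
  assert (Et : t = 1 - hinner (PU s) (PU s)).
  { unfold t, b. inner_expand. rewrite (hinner_sym _ (PU s) s), EsP, <- Es. ring. }
  assert (Ebs : hinner b s = t).
  { rewrite Et. unfold b. inner_expand. rewrite (hinner_sym _ (PU s) s), EsP, <- Es. ring. }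
  assert (Gts : G (hscal t s)) by (apply subspace_scal; auto).
  pose proof (proj_best_approx G PG hG hPG b _ Gts) as Hbest.
  assert (Edist : hinner (hsub b (hscal t s)) (hsub b (hscal t s))
                  = hinner (PU s) (PU s) * t).
  { inner_expand. rewrite (hinner_sym _ s b), Ebs, <- Es. fold t. rewrite Et. ring. }
  rewrite Edist in Hbest.
  apply le_of_sq_le.
  - apply Rmult_le_pos; apply norm_nonneg.
  - rewrite norm_sq.
    replace (hnorm (PU s) * hnorm b * (hnorm (PU s) * hnorm b))
      with ((hnorm (PU s) * hnorm (PU s)) * (hnorm b * hnorm b)) by ring.
    rewrite !norm_sq. exact Hbest.
Qed.

(* Sharpness: for 1 <= K < 1/c the defect of a nearly extremal s beats K. *)
Lemma oblique_residual_sharp K :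
  1 <= K -> K < 1 / c ->
  exists f, K * hnorm (hsub f (PG f)) < hnorm (hsub f (Q f)).
Proof.
  intros HK1 HK. destruct (angle_approx_inv K HK) as (s & Gs & Ns & HKs).
  set (b := hsub s (PU s)). exists b.
  assert (Eres : hsub b (Q b) = b).
  { unfold b at 2. rewrite oblique_on_defect. apply sub_eq0. inner_expand. ring. }
  rewrite Eres.
  pose proof (defect_dist s Gs Ns) as Hdist. fold b in Hdist.
  pose proof (norm_nonneg (PU s)).
  assert (Hb : 0 < hnorm b).
  { destruct (Rle_lt_or_eq_dec _ _ (norm_nonneg b)) as [|E]; [assumption|].
    pose proof (norm_sq b) as Eb. rewrite <- E, Rmult_0_l in Eb.
    pose proof (norm_sq s) as Es. rewrite Ns in Es.
    pose proof (norm_sq (PU s)) as EP.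
    assert (EsP : hinner s (PU s) = hinner (PU s) (PU s)) by apply (proj_inner U PU hPU).
    unfold b in Eb. inner_expand. rewrite (hinner_sym _ (PU s) s) in Eb. nra. }
  apply Rle_lt_trans with (K * (hnorm (PU s) * hnorm b)).
  - apply Rmult_le_compat_l; lra.
  - nra.
Qed.

End ObliqueProjection.

Theorem theorem2p5 (H : Hilbert) (U G : H -> Prop)
  (hU : closed_subspace U) (hG : closed_subspace G)
  (PU PG Q : H -> H)
  (hPU : is_orth_proj U PU) (hPG : is_orth_proj G PG)
  (c : R) (hc : is_cos_angle G PU c) (hcpos : 0 < c)
  (hQ : is_oblique_proj G (orth (image_set PU G)) Q) :
  is_opnorm Q (1 / c) /\
  (forall f : H,
     hnorm (hsub f (PG f)) <= hnorm (hsub f (Q f)) /\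
     hnorm (hsub f (Q f)) <= (1 / c) * hnorm (hsub f (PG f))) /\
  ((exists h : H, ~ G h) ->
     forall K : R, K < 1 / c ->
       exists f : H, K * hnorm (hsub f (PG f)) < hnorm (hsub f (Q f))).
Proof.
  assert (Hlower : forall f, hnorm (hsub f (PG f)) <= hnorm (hsub f (Q f))).
  { intro f. apply norm_le, (proj_best_approx G PG hG hPG), (oblique_mem G PU Q hQ). }
  split; [|split].
  -
    apply is_sup_intro.
    + intros r (f & Hf & ->).
      pose proof (oblique_norm_le U G PU Q c hU hG hPU hc hcpos hQ f).
      assert (0 < 1 / c) by (apply Rdiv_lt_0_compat; lra). nra.
    + intros b Hb. destruct (oblique_norm_attained U G PU Q c hU hG hPU hc hcpos hQ b Hb)
        as (f & Hf & Hbf).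
      exists (hnorm (Q f)). split; [now exists f | exact Hbf].
  -
    intro f. split; [apply Hlower|].
    apply le_div_of_mul_le; [exact hcpos|].
    exact (oblique_residual_le U G PU PG Q c hU hG hPU hPG hc hcpos hQ f).
  -
    intros [h Nh] K HK. destruct (Rlt_le_dec K 1) as [HK1|HK1].
    + exists h. pose proof (proj_dist_pos G PG hPG h Nh). pose proof (Hlower h). nra.
    + exact (oblique_residual_sharp U G PU PG Q c hU hG hPU hPG hc hcpos hQ K HK1 HK).
Qed.
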